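(* The magmatic $\mathbb K$-algebra $\mathrm{Mag}$ has a $\Bbbk$-basis consisting of the trivial monomials $1_n$ ($n\in\mathbb N$) and the monomials $\partial^m_{i_m}\cdots\partial^n_{i_n}$ with $m\ge n\ge0$, $i_m\ge\cdots\ge i_n$, and $0\le i_j\le j$ for all $j=n,\dots,m$.
   Context: Let $\Bbbk$ be a field and $\mathbb{K}=\bigoplus_{n\in\mathbb N}\Bbbk1_n$ with $1_n1_m=\delta_{nm}1_n$. A $\mathbb K$-algebra is the categorical algebra of a small $\Bbbk$-linear category with object set $\mathbb N$. $T(\partial)$ is the free $\mathbb K$-algebra on generators $\partial^n_j$ ($n\ge0$, $0\le j\le n$), where $\partial^n_j$ is a morphism $n\to n+1$ (so $1_{n+1}\partial^n_j=\partial^n_j1_n=\partial^n_j$, and products of generators with mismatched degrees are $0$; nonzero monomials have the form $\partial^m_{i_m}\partial^{m-1}_{i_{m-1}}\cdots\partial^n_{i_n}$). $\mathrm{Mag}=T(\partial)/I_{\mathrm{Mag}}$ with $I_{\mathrm{Mag}}$ the two-sided ideal generated by $\partial^{n+1}_i\partial^n_j-\partial^{n+1}_{j+1}\partial^n_i$ for $0\le i<j\le n$, $n\ge0$. *)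

From HB Require Import structures.
From mathcomp Require Import all_boot all_algebra.
From mathcomp Require Import finmap monalg.

Set Implicit Arguments.
Unset Strict Implicit.
Unset Printing Implicit Defensive.

Import GRing.Theory.
Local Open Scope ring_scope.

(* A monomial is encoded by a pair (n, w) with w = [:: i_n; i_(n+1); ...; i_m]
   and stands for  partial^m_{i_m} ... partial^(n+1)_{i_(n+1)} partial^n_{i_n},
   a morphism n -> m+1 (i.e. n -> n + size w).  The generator at position p
   of w is partial^(n+p)_{w_p}, so it is required that w_p <= n + p.
   The pair (n, [::]) is the trivial monomial 1_n.                      *)

Definition valid_mon (x : nat * seq nat) : bool :=
  all (fun p => nth 0%N x.2 p <= x.1 + p)%N (iota 0 (size x.2)).

Definition mon : Type := {x : nat * seq nat | valid_mon x}.

Definition mon_src (u : mon) : nat := (val u).1.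
Definition mon_word (u : mon) : seq nat := (val u).2.
Definition mon_tgt (u : mon) : nat := (mon_src u + size (mon_word u))%N.

(* The free K-algebra T(partial), as a k-vector space: finitely supported
   k-linear combinations of monomials (the monomials form a k-basis). *)
Definition Tpar (k : fieldType) : Type := {malg k[mon]}.

(* The element of T(partial) given by the word (n, w) if it is a valid
   monomial, and 0 otherwise (only used on valid words). *)
Definition mono (k : fieldType) (n : nat) (w : seq nat) : Tpar k :=
  match @insub _ valid_mon _ (n, w) with
  | Some u => << (u : mon) >>
  | None => 0
  end.

Definition one_ (k : fieldType) (n : nat) : Tpar k := mono k n [::].
Definition gen (k : fieldType) (n j : nat) : Tpar k := mono k n [:: j].

(* Product of monomials in the categorical algebra: u * v = u o v,
   nonzero only when the source of u is the target of v. *)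
Definition mon_mul (k : fieldType) (u v : mon) : Tpar k :=
  if mon_src u == mon_tgt v
  then mono k (mon_src v) (mon_word v ++ mon_word u)
  else 0.

Definition Tmul (k : fieldType) (p q : Tpar k) : Tpar k :=
  \sum_(u <- msupp p) \sum_(v <- msupp q) (p@_u * q@_v) *: mon_mul k u v.

(* The generating relations of I_Mag:
   partial^(n+1)_i partial^n_j - partial^(n+1)_(j+1) partial^n_i,
   for 0 <= i < j <= n. *)
Definition mag_rel (k : fieldType) (n i j : nat) : Tpar k :=
  mono k n [:: j; i] - mono k n [:: i; j.+1].

Inductive in_IMag (k : fieldType) : Tpar k -> Prop :=
  | IMag_gen n i j : (i < j)%N -> (j <= n)%N -> in_IMag (mag_rel k n i j)
  | IMag_zero : in_IMag 0
  | IMag_add p q : in_IMag p -> in_IMag q -> in_IMag (p + q)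
  | IMag_scale (c : k) p : in_IMag p -> in_IMag (c *: p)
  | IMag_mull (a p : Tpar k) : in_IMag p -> in_IMag (Tmul a p)
  | IMag_mulr (p a : Tpar k) : in_IMag p -> in_IMag (Tmul p a).

(* Normal monomials: the trivial ones 1_n (empty word) and
   partial^m_{i_m} ... partial^n_{i_n} with i_m >= ... >= i_n, i.e. the
   word [:: i_n; ...; i_m] is nondecreasing. *)
Definition normal_mon (u : mon) : bool := sorted leq (mon_word u).

Definition Mag_spanned_by_normal (k : fieldType) : Prop :=
  forall p : Tpar k, exists q : Tpar k,
    (forall u, u \in msupp q -> normal_mon u) /\ in_IMag (p - q).

Definition normal_indep_mod_IMag (k : fieldType) : Prop :=
  forall q : Tpar k,
    (forall u, u \in msupp q -> normal_mon u) -> in_IMag q -> q = 0.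

From HB Require Import structures.
From mathcomp Require Import all_boot all_algebra.
From mathcomp Require Import finmap monalg.
From mathcomp Require Import zify.

Set Implicit Arguments.
Unset Strict Implicit.
Unset Printing Implicit Defensive.

Import GRing.Theory.

(* Read the generators of I_Mag as the rewriting rule
   ∂^{n+1}_i ∂^n_j -> ∂^{n+1}_{j+1} ∂^n_i  (i < j);
   on the word [:: i_n; ...; i_m] of a monomial it lets a letter pass in front
   of every larger letter, which is incremented.  Inserting the letters of a
   word one by one into a nondecreasing word gives its normal form.  Each
   rewriting step is a generator multiplied on both sides, so every monomial is
   congruent to its normal form modulo I_Mag: the normal monomials span Mag.
   Conversely, two insertions commute up to this very relation, so the normal
   form of a ++ b depends only on the normal forms of a and b.  Hence the linear
   map sending each monomial to its normal form satisfies
   N(a p) = N(a N(p)) and N(p a) = N(N(p) a) and kills the generators; its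
   kernel is then a two-sided ideal containing I_Mag, while N fixes every
   combination of normal monomials, which gives independence. *)

Lemma sorted_rcons (T : Type) (leT : rel T) (leT_tr : transitive leT)
    (s : seq T) (y : T) :
  sorted leT (rcons s y) = sorted leT s && all (leT^~ y) s.
Proof.
rewrite -rev_sorted rev_rcons /= path_sortedE; last first.
  by move=> a b c /= le_ba le_cb; apply: leT_tr le_cb le_ba.
by rewrite rev_sorted all_rev andbC.
Qed.

Fixpoint mag_ins (s : seq nat) (x : nat) : seq nat :=
  if s is y :: s' then
    if y <= x then y :: mag_ins s' x else x :: map succn s
  else [:: x].

Definition mag_nf (w : seq nat) : seq nat := foldl mag_ins [::] w.

Lemma size_mag_ins s x : size (mag_ins s x) = (size s).+1.
Proof. by elim: s => //= y s IH; case: ifP => _ /=; rewrite ?IH ?size_map. Qed.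

Lemma mag_ins_map_succ s x : mag_ins (map succn s) x.+1 = map succn (mag_ins s x).
Proof. by elim: s => //= y s IH; rewrite ltnS; case: ifP => _; rewrite ?IH. Qed.

Lemma mag_ins_rcons_lt s x y : x < y -> mag_ins (rcons s y) x = rcons (mag_ins s x) y.+1.
Proof.
move=> lt_xy; elim: s => [|z s IH] /=; first by rewrite leqNgt lt_xy.
by case: ifP => _; rewrite ?IH ?map_rcons.
Qed.

Lemma mag_ins_sorted_rcons s x : sorted leq (rcons s x) -> mag_ins s x = rcons s x.
Proof.
rewrite (sorted_rcons leq_trans).
by case/andP=> _; elim: s => //= y s IH /andP[-> /IH ->].
Qed.

Lemma all_mag_ins y s x : all (leq y) s -> y <= x -> all (leq y) (mag_ins s x).
Proof.
elim: s => [|z s IH] /=; first by move=> _ ->.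
move=> /andP[le_yz all_s] le_yx; case: ifP => _ /=; first by rewrite le_yz IH.
by rewrite le_yx all_map leqW // (sub_all _ all_s) // => t /leqW.
Qed.

Lemma mag_ins_sorted s x : sorted leq s -> sorted leq (mag_ins s x).
Proof.
elim: s => [|y s IH] //=; rewrite (path_sortedE leq_trans) => /andP[all_s sorted_s].
case: leqP => [le_yx | lt_xy] /=.
  by rewrite (path_sortedE leq_trans) all_mag_ins // IH.
by rewrite (leqW (ltnW lt_xy)) path_map (path_sortedE leq_trans) all_s.
Qed.

Lemma mag_insC s i j : sorted leq s -> i < j ->
  mag_ins (mag_ins s j) i = mag_ins (mag_ins s i) j.+1.
Proof.
move=> + lt_ij; have le_ij1 : i <= j.+1 by lia.
elim: s => [|y s IH] /=; first by rewrite leqNgt lt_ij le_ij1.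
rewrite (path_sortedE leq_trans) => /andP[_ /IH {}IH].
have [le_yi | lt_iy] := leqP y i.
  have le_yj : y <= j by lia.
  by rewrite le_yj /= le_yi (leqW le_yj) IH.
rewrite /= le_ij1 ltnS; have le_yi : (y <= i) = false by lia.
have [le_yj | lt_jy] := leqP y j; rewrite /= ?le_yi ?mag_ins_map_succ //.
by have -> : (j <= i) = false by lia.
Qed.

Lemma sorted_rcons_rcons s y x :
  sorted leq (rcons s y) -> sorted leq (rcons (rcons s y) x) = (y <= x).
Proof.
move=> sorted_sy; rewrite (sorted_rcons leq_trans (rcons s y)) all_rcons sorted_sy /=.
move: sorted_sy; rewrite (sorted_rcons leq_trans) => /andP[_ all_s].
by case: leqP => //= le_yx; apply: sub_all all_s => z /leq_trans; apply.
Qed.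

Lemma sorted_foldl_mag_ins t s : sorted leq t -> sorted leq (foldl mag_ins t s).
Proof. by elim: s t => //= x s IH t /(mag_ins_sorted x)/IH. Qed.

Lemma foldl_mag_ins t s x : sorted leq t -> sorted leq s ->
  foldl mag_ins t (mag_ins s x) = mag_ins (foldl mag_ins t s) x.
Proof.
move=> sorted_t; elim/last_ind: s => [|s y IH] // sorted_sy.
have [le_yx | lt_xy] := leqP y x.
  by rewrite mag_ins_sorted_rcons ?foldl_rcons ?sorted_rcons_rcons.
have sorted_s := subseq_sorted leq_trans (subseq_rcons s y) sorted_sy.
rewrite mag_ins_rcons_lt // !foldl_rcons IH //.
by rewrite [RHS]mag_insC ?sorted_foldl_mag_ins.
Qed.

Lemma mag_nf_rcons w x : mag_nf (rcons w x) = mag_ins (mag_nf w) x.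
Proof. exact: foldl_rcons. Qed.

Lemma mag_nf_sorted w : sorted leq (mag_nf w).
Proof. exact: sorted_foldl_mag_ins. Qed.

Lemma size_mag_nf w : size (mag_nf w) = size w.
Proof.
by elim/last_ind: w => // w x IH; rewrite mag_nf_rcons size_mag_ins IH size_rcons.
Qed.

Lemma mag_nf_id w : sorted leq w -> mag_nf w = w.
Proof.
elim/last_ind: w => // w x IH sorted_wx.
have sorted_w := subseq_sorted leq_trans (subseq_rcons w x) sorted_wx.
by rewrite mag_nf_rcons IH // mag_ins_sorted_rcons.
Qed.

Lemma mag_nf_cat a b : mag_nf (a ++ b) = foldl mag_ins (mag_nf a) b.
Proof. exact: foldl_cat. Qed.

Lemma mag_nf_catl a b : mag_nf (a ++ b) = mag_nf (mag_nf a ++ b).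
Proof. by rewrite !mag_nf_cat (mag_nf_id (mag_nf_sorted a)). Qed.

Lemma mag_nf_catr a b : mag_nf (a ++ b) = mag_nf (a ++ mag_nf b).
Proof.
elim/last_ind: b => // b x IH.
by rewrite -rcons_cat !mag_nf_rcons IH !mag_nf_cat foldl_mag_ins ?mag_nf_sorted.
Qed.

Lemma valid_cons n x w : valid_mon (n, x :: w) = (x <= n) && valid_mon (n.+1, w).
Proof.
rewrite /valid_mon /= addn0 -[1]addn0 iotaDl all_map; congr (_ && _).
by apply: eq_all => p /=; rewrite add1n addnS.
Qed.

Lemma valid_cat n a b :
  valid_mon (n, a ++ b) = valid_mon (n, a) && valid_mon (n + size a, b).
Proof.
elim: a n => [|x a IH] n; first by rewrite addn0.
by rewrite cat_cons !valid_cons IH andbA addSnnS.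
Qed.

Lemma valid_rcons n w x :
  valid_mon (n, rcons w x) = valid_mon (n, w) && (x <= n + size w).
Proof. by rewrite -cats1 valid_cat valid_cons andbT. Qed.

Lemma valid_map_succ n w : valid_mon (n.+1, map succn w) = valid_mon (n, w).
Proof. by elim: w n => //= x w IH n; rewrite !valid_cons IH. Qed.

Lemma valid_mag_ins n s x : valid_mon (n, rcons s x) -> valid_mon (n, mag_ins s x).
Proof.
elim: s n => [|y s IH] n //=; rewrite valid_cons => /andP[le_yn valid_sx].
case: leqP => [_ | lt_xy]; first by rewrite valid_cons le_yn IH.
rewrite !valid_cons valid_map_succ ltnS le_yn (leq_trans (ltnW lt_xy) le_yn).
by move: valid_sx; rewrite valid_rcons => /andP[].
Qed.

Lemma valid_mag_nf n w : valid_mon (n, w) -> valid_mon (n, mag_nf w).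
Proof.
elim/last_ind: w => // w x IH; rewrite valid_rcons => /andP[/IH valid_w le_x].
by rewrite mag_nf_rcons valid_mag_ins // valid_rcons valid_w size_mag_nf.
Qed.

Local Open Scope ring_scope.

Section MalgLift.
Variables (K : choiceType) (R : nzRingType) (V : lmodType R).

Lemma monalgUZ (c : R) (u : K) : << c *g u >> = c *: << u >> :> {malg R[K]}.
Proof. by apply/malgP => v; rewrite mcoeffZ !mcoeffU mulr_natr. Qed.

Definition malg_lift (F : K -> V) (p : {malg R[K]}) : V :=
  \sum_(u <- msupp p) p@_u *: F u.

Lemma malg_liftEw F (d : {fset K}) p : (msupp p `<=` d)%fset ->
  malg_lift F p = \sum_(u <- d) p@_u *: F u.
Proof.
move=> le; rewrite /malg_lift (big_fset_incl _ le) // => u _ /mcoeff_outdom ->.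
by rewrite scale0r.
Qed.

Lemma malg_lift_is_linear F : linear (malg_lift F).
Proof.
move=> c p q; have le_p := fsubsetUl (msupp p) (msupp q).
have le_q := fsubsetUr (msupp p) (msupp q).
have le_pq : (msupp (c *: p + q) `<=` msupp p `|` msupp q)%fset.
  exact/(fsubset_trans (msuppD_le _ _))/fsetSU/msuppZ_le.
rewrite !(malg_liftEw _ le_p, malg_liftEw _ le_q, malg_liftEw _ le_pq).
rewrite scaler_sumr -big_split; apply: eq_bigr => u _.
by rewrite mcoeffD mcoeffZ scalerDl scalerA.
Qed.

HB.instance Definition _ F :=
  GRing.isLinear.Build R {malg R[K]} V *:%R (malg_lift F) (malg_lift_is_linear F).

Lemma malg_liftU F u : malg_lift F << u >> = F u.
Proof. by rewrite /malg_lift msuppU oner_eq0 big_seq_fset1 mcoeffUU scale1r. Qed.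

Lemma malg_lift_unique (f : {malg R[K]} -> V) :
  linear f -> f =1 malg_lift (fun u => f << u >>).
Proof.
move=> lin_f p; rewrite {1}(monalgE p) /malg_lift.
pose fL : {linear {malg R[K]} -> V} := HB.pack f (GRing.isLinear.Build _ _ _ _ f lin_f).
have /= -> := linear_sum fL; apply: eq_bigr => u _.
by rewrite monalgUZ; have /= -> := linearZ_LR fL.
Qed.
End MalgLift.

Lemma malg_bilinear_eq (K K' : choiceType) (R : nzRingType) (V : lmodType R)
    (f g : {malg R[K]} -> {malg R[K']} -> V) :
  (forall a, linear (f a)) -> (forall p, linear (f^~ p)) ->
  (forall a, linear (g a)) -> (forall p, linear (g^~ p)) ->
  (forall u v, f << u >> << v >> = g << u >> << v >>) -> forall a p, f a p = g a p.
Proof.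
move=> f_r f_l g_r g_l fg a p.
rewrite (malg_lift_unique (f_r a)) (malg_lift_unique (g_r a)).
apply: eq_bigr => v _; congr (_ *: _).
rewrite (malg_lift_unique (f_l _)) (malg_lift_unique (g_l _)).
by apply: eq_bigr => u _; rewrite fg.
Qed.

Lemma msupp_malg_lift (K K' : choiceType) (R : nzRingType) (F : K -> {malg R[K']})
    (P : {pred K'}) (p : {malg R[K]}) :
  (forall v, {subset msupp (F v) <= P}) -> {subset msupp (malg_lift F p) <= P}.
Proof.
move=> sub_F; rewrite /malg_lift; elim: (val (msupp p)) => [|v s IH] u.
  by rewrite big_nil msupp0.
rewrite big_cons => /(fsubsetP (msuppD_le _ _)); rewrite inE => /orP[|/IH //].
by move=> /(fsubsetP (msuppZ_le _ _))/sub_F.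
Qed.

Section FreeAlgebra.
Variable k : fieldType.
Implicit Types (p q a : Tpar k) (u v : mon).

Lemma mon_valid u : valid_mon (mon_src u, mon_word u).
Proof. by case: u => -[]. Qed.

Lemma monoE n w (valid_w : valid_mon (n, w)) :
  mono k n w = << (exist _ (n, w) valid_w : mon) >>.
Proof. by rewrite /mono insubT. Qed.

Lemma mono_val u : mono k (mon_src u) (mon_word u) = << u >>.
Proof. by case: u => -[n w] valid_w; rewrite monoE. Qed.

Lemma TmulE p q : Tmul p q = malg_lift (fun u => malg_lift (mon_mul k u) q) p.
Proof.
apply: eq_bigr => u _; rewrite scaler_sumr; apply: eq_bigr => v _.
by rewrite scalerA.
Qed.

Lemma TmulEr p q : Tmul p q = malg_lift (fun v => malg_lift (mon_mul k ^~ v) p) q.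
Proof.
rewrite /Tmul exchange_big; apply: eq_bigr => v _; rewrite scaler_sumr.
by apply: eq_bigr => u _; rewrite scalerA mulrC.
Qed.

Lemma Tmul_bilinear : bilinear_for *:%R *:%R (@Tmul k).
Proof.
split=> [q c p p' | p c q q']; first by rewrite !TmulE linearP.
by rewrite !TmulEr linearP.
Qed.

HB.instance Definition _ :=
  bilinear_isBilinear.Build k (Tpar k) (Tpar k) (Tpar k) *:%R *:%R (@Tmul k)
    Tmul_bilinear.

Lemma TmulU u v : Tmul << u >> << v >> = mon_mul k u v.
Proof. by rewrite TmulE !malg_liftU. Qed.

Lemma Tmul_mono m w n s : valid_mon (m, w) -> valid_mon (n, s) ->
  Tmul (mono k m w) (mono k n s) = if m == (n + size s)%N then mono k n (s ++ w) else 0.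
Proof. by move=> valid_w valid_s; rewrite (monoE valid_w) (monoE valid_s) TmulU. Qed.

Lemma Tmul_mono_cat n s w : valid_mon (n, s) -> valid_mon ((n + size s)%N, w) ->
  Tmul (mono k (n + size s)%N w) (mono k n s) = mono k n (s ++ w).
Proof. by move=> valid_s valid_w; rewrite Tmul_mono // eqxx. Qed.

Lemma IMag_sub_trans a b c : in_IMag (a - b) -> in_IMag (b - c) -> in_IMag (a - c).
Proof. by move=> I_ab I_bc; have := IMag_add I_ab I_bc; rewrite addrA subrK. Qed.

Lemma IMag_mono_cat n s t w :
  valid_mon (n, s) -> valid_mon (n, t) -> size s = size t ->
  valid_mon ((n + size s)%N, w) ->
  in_IMag (mono k n s - mono k n t) -> in_IMag (mono k n (s ++ w) - mono k n (t ++ w)).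
Proof.
move=> valid_s valid_t eq_st valid_w I_st.
rewrite -(Tmul_mono_cat valid_s valid_w) -Tmul_mono_cat ?eq_st -?eq_st //.
by rewrite -linearBr; apply: IMag_mull.
Qed.

Lemma IMag_mono_swap n s i j : (i < j)%N -> valid_mon (n, s ++ [:: j; i]) ->
  in_IMag (mono k n (s ++ [:: j; i]) - mono k n (s ++ [:: i; j.+1])).
Proof.
rewrite valid_cat !valid_cons /= andbT => lt_ij /andP[valid_s le_j].
have valid_ji : valid_mon ((n + size s)%N, [:: j; i]).
  by rewrite !valid_cons /= andbT; lia.
have valid_ij : valid_mon ((n + size s)%N, [:: i; j.+1]).
  by rewrite !valid_cons /= andbT; lia.
rewrite -!Tmul_mono_cat // -linearBl.
by apply: IMag_mulr; apply: IMag_gen; lia.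
Qed.

Lemma IMag_mono_rcons_ins n s x : sorted leq s -> valid_mon (n, rcons s x) ->
  in_IMag (mono k n (rcons s x) - mono k n (mag_ins s x)).
Proof.
elim/last_ind: s x => [|s y IH] x sorted_sy valid_syx.
  by rewrite subrr; apply: IMag_zero.
have [le_yx | lt_xy] := leqP y x.
  by rewrite mag_ins_sorted_rcons ?sorted_rcons_rcons // subrr; apply: IMag_zero.
have sorted_s := subseq_sorted leq_trans (subseq_rcons s y) sorted_sy.
have le_y : (y <= n + size s)%N.
  by move: valid_syx; rewrite !valid_rcons => /andP[/andP[_ ->]].
have valid_sx : valid_mon (n, rcons s x).
  by move: valid_syx; rewrite !valid_rcons size_rcons => /andP[/andP[-> _] _]; lia.
rewrite mag_ins_rcons_lt //.
apply: (IMag_sub_trans (b := mono k n (rcons (rcons s x) y.+1))).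
  rewrite -!cats1 -!catA; apply: IMag_mono_swap => //.
  by move: valid_syx; rewrite -!cats1 -catA.
rewrite -(cats1 (rcons s x)) -(cats1 (mag_ins s x)).
apply: IMag_mono_cat; rewrite ?valid_mag_ins ?size_mag_ins ?size_rcons //; last exact: IH.
by rewrite valid_cons addnS ltnS le_y.
Qed.

Lemma IMag_mono_mag_nf n w : valid_mon (n, w) ->
  in_IMag (mono k n w - mono k n (mag_nf w)).
Proof.
elim/last_ind: w => [_ | w x IH]; first by rewrite /mag_nf /= subrr; apply: IMag_zero.
move=> valid_wx; have := valid_wx; rewrite valid_rcons => /andP[valid_w le_x].
have valid_nfx : valid_mon (n, rcons (mag_nf w) x).
  by rewrite valid_rcons valid_mag_nf // size_mag_nf.
apply: (IMag_sub_trans (b := mono k n (rcons (mag_nf w) x))).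
  rewrite -!cats1; apply: IMag_mono_cat; rewrite ?valid_mag_nf ?size_mag_nf //.
    by rewrite valid_cons le_x.
  exact: IH.
by rewrite mag_nf_rcons; apply: IMag_mono_rcons_ins; rewrite ?mag_nf_sorted.
Qed.

Lemma IMag_malg_lift (F : mon -> Tpar k) p :
  (forall u, in_IMag (F u)) -> in_IMag (malg_lift F p).
Proof.
move=> I_F; rewrite /malg_lift; elim/big_ind: _ => //; first exact: IMag_zero.
  exact: IMag_add.
by move=> u _; apply: IMag_scale.
Qed.

Lemma msupp_mono n w u : u \in msupp (mono k n w) -> mon_word u = w.
Proof.
rewrite /mono; case: insubP => [v _ val_v | _]; last by rewrite msupp0.
by rewrite msuppU oner_eq0 inE => /eqP ->; rewrite /mon_word val_v.
Qed.

Definition normalize : Tpar k -> Tpar k :=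
  malg_lift (fun u => mono k (mon_src u) (mag_nf (mon_word u))).

HB.instance Definition _ :=
  GRing.isLinear.Build k (Tpar k) (Tpar k) *:%R normalize (malg_lift_is_linear _).

Lemma normalizeU u : normalize << u >> = mono k (mon_src u) (mag_nf (mon_word u)).
Proof. exact: malg_liftU. Qed.

Lemma normalize_mono n w :
  valid_mon (n, w) -> normalize (mono k n w) = mono k n (mag_nf w).
Proof. by move=> valid_w; rewrite (monoE valid_w) normalizeU. Qed.

Lemma normalize_TmulUr u v :
  normalize (Tmul << u >> << v >>) = normalize (Tmul << u >> (normalize << v >>)).
Proof.
have [valid_u valid_v] := (mon_valid u, mon_valid v).
rewrite normalizeU -(mono_val u) -(mono_val v).
rewrite (Tmul_mono valid_u valid_v) (Tmul_mono valid_u (valid_mag_nf valid_v)).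
rewrite size_mag_nf.
case: eqP => [src_u | _]; last by rewrite linear0.
rewrite src_u in valid_u; rewrite !normalize_mono -?mag_nf_catl // valid_cat.
  by rewrite valid_mag_nf // size_mag_nf valid_u.
by rewrite valid_v valid_u.
Qed.

Lemma normalize_TmulUl u v :
  normalize (Tmul << u >> << v >>) = normalize (Tmul (normalize << u >>) << v >>).
Proof.
have [valid_u valid_v] := (mon_valid u, mon_valid v).
rewrite normalizeU -(mono_val u) -(mono_val v).
rewrite (Tmul_mono valid_u valid_v) (Tmul_mono (valid_mag_nf valid_u) valid_v).
case: eqP => [src_u | _]; last by rewrite linear0.
rewrite src_u in valid_u; rewrite !normalize_mono -?mag_nf_catr // valid_cat.
  by rewrite valid_v valid_mag_nf.
by rewrite valid_v valid_u.
Qed.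

Lemma normalize_Tmulr a p : normalize (Tmul a p) = normalize (Tmul a (normalize p)).
Proof.
apply: (@malg_bilinear_eq _ _ _ _ (fun a p => normalize (Tmul a p))
  (fun a p => normalize (Tmul a (normalize p))))
  => [b c x y | q c x y | b c x y | q c x y |].
- by rewrite /= linearPr linearP.
- by rewrite /= linearPl linearP.
- by rewrite /= !linearP linearPr linearP.
- by rewrite /= linearPl linearP.
exact: normalize_TmulUr.
Qed.

Lemma normalize_Tmull a p : normalize (Tmul p a) = normalize (Tmul (normalize p) a).
Proof.
apply: (@malg_bilinear_eq _ _ _ _ (fun p a => normalize (Tmul p a))
  (fun p a => normalize (Tmul (normalize p) a)))
  => [b c x y | q c x y | b c x y | q c x y |].
- by rewrite /= linearPr linearP.
- by rewrite /= linearPl linearP.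
- by rewrite /= linearPr linearP.
- by rewrite /= !linearP linearPl linearP.
exact: normalize_TmulUl.
Qed.

Lemma normalize_IMag p : in_IMag p -> normalize p = 0.
Proof.
elim=> {p} [n i j lt_ij le_jn | | p q _ Np _ Nq | c p _ Np | a p _ Np | p a _ Np].
- have valid_ji : valid_mon (n, [:: j; i]) by rewrite !valid_cons /= andbT; lia.
  have valid_ij : valid_mon (n, [:: i; j.+1]) by rewrite !valid_cons /= andbT; lia.
  have nf_ji : mag_nf [:: j; i] = [:: i; j.+1] by rewrite /mag_nf /= leqNgt lt_ij.
  by rewrite /mag_rel linearB /= !normalize_mono // nf_ji mag_nf_id ?subrr //=; lia.
- by rewrite linear0.
- by rewrite linearD /= Np Nq addr0.
- by rewrite linearZ /= Np scaler0.
- by rewrite normalize_Tmulr Np linear0r linear0.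
- by rewrite normalize_Tmull Np linear0l linear0.
Qed.

Lemma normal_mon_normalize p u : u \in msupp (normalize p) -> normal_mon u.
Proof.
move: u; apply: (msupp_malg_lift (P := normal_mon)) => v u /msupp_mono word_u.
by rewrite unfold_in /normal_mon word_u mag_nf_sorted.
Qed.

Lemma normalize_id q : (forall u, u \in msupp q -> normal_mon u) -> normalize q = q.
Proof.
move=> normal_q; rewrite {2}(monalgE q); apply: eq_big_seq => u /normal_q normal_u.
by rewrite monalgUZ (mag_nf_id normal_u) mono_val.
Qed.

Lemma IMag_sub_normalize p : in_IMag (p - normalize p).
Proof.
have lin : linear (fun p => p - normalize p).
  by move=> c x y; rewrite linearP scalerBr addrACA opprD.
rewrite (malg_lift_unique lin); apply: IMag_malg_lift => u.
by rewrite normalizeU -{1}(mono_val u); apply/IMag_mono_mag_nf/mon_valid.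
Qed.

End FreeAlgebra.

Theorem proposition1p2 (k : fieldType) :
  Mag_spanned_by_normal k /\ normal_indep_mod_IMag k.
Proof.
split=> [p | q normal_q I_q].
  exists (normalize p); split; [exact: normal_mon_normalize | exact: IMag_sub_normalize].
by rewrite -(normalize_id normal_q) normalize_IMag.
Qed.
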